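(* Let $m$ be a positive integer with $\omega(m)\geq 149$. Then $W(m)<m^{1/8}$.
   Context: For a positive integer $m$, $\omega(m)$ is the number of distinct prime divisors of $m$ and $W(m)=2^{\omega(m)}$. *)

From mathcomp Require Import all_boot.
From Stdlib Require Import Reals.

Definition omega (m : nat) : nat := size (primes m).
Definition W (m : nat) : nat := 2 ^ omega m.

(* m is at least the product of its distinct prime factors and W(m)^8 = 256^w(m),
   so it suffices that any k >= 149 distinct primes have product > 256^k.
   Exactly 149 primes lie below 860 and their product P exceeds 256^149.  In a
   set S of k distinct primes, trade the primes below 860 missing from S for the
   primes of S above 860: the former are < 860, the latter >= 860 and there are
   k - 149 more of them, so prod S >= P * 860^(k - 149) > 256^k. *)
From Stdlib Require Import BinInt Znat.
From mathcomp Require Import all_boot.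

Definition primes_below (B : nat) : seq nat := [seq p <- iota 0 B | prime p].

Lemma mem_primes_below B p : (p \in primes_below B) = prime p && (p < B).
Proof. by rewrite mem_filter mem_iota add0n andbC. Qed.

Lemma prod_leq_expn (b : nat) (s : seq nat) :
  all (fun p => p <= b) s -> \prod_(p <- s) p <= b ^ size s.
Proof.
elim: s => [|p s IHs] /=; first by rewrite big_nil.
by case/andP=> le_pb /IHs le_sb; rewrite big_cons expnS leq_mul.
Qed.

Lemma expn_leq_prod (b : nat) (s : seq nat) :
  all (fun p => b <= p) s -> b ^ size s <= \prod_(p <- s) p.
Proof.
elim: s => [|p s IHs] /=; first by rewrite big_nil.
by case/andP=> le_bp /IHs le_bs; rewrite big_cons expnS leq_mul.
Qed.

Section ExchangePrimes.

Variables (B : nat) (s : seq nat).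
Hypotheses (s_uniq : uniq s) (s_prime : all prime s).

Let small := [seq p <- s | p < B].
Let large := [seq p <- s | ~~ (p < B)].
Let missing := [seq p <- primes_below B | p \notin s].

Let perm_small : perm_eq [seq p <- primes_below B | p \in s] small.
Proof.
apply: uniq_perm; rewrite ?filter_uniq ?iota_uniq // => p.
rewrite !mem_filter mem_iota add0n.
case: (boolP (p \in s)) => [p_s|_]; last by rewrite andbF.
by rewrite (allP s_prime _ p_s) andbT.
Qed.

Lemma prod_primes_below_mul_expn :
  \prod_(p <- primes_below B) p * B ^ size s
    <= \prod_(p <- s) p * B ^ size (primes_below B).
Proof.
have size_s : size s = size small + size large.
  by rewrite !size_filter count_predC.
have size_B : size (primes_below B) = size small + size missing.
  rewrite -(perm_size perm_small) (size_filter (fun p => p \in s)).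
  by rewrite (size_filter (fun p => p \notin s)) count_predC.
have prod_s : \prod_(p <- s) p = \prod_(p <- small) p * \prod_(p <- large) p.
  by rewrite (bigID (fun p => p < B)) !big_filter.
have prod_B : \prod_(p <- primes_below B) p
              = \prod_(p <- small) p * \prod_(p <- missing) p.
  by rewrite -(perm_big _ perm_small) (bigID (fun p => p \in s)) !big_filter.
have missing_le : \prod_(p <- missing) p <= B ^ size missing.
  apply: prod_leq_expn; apply/allP => p.
  by rewrite mem_filter mem_primes_below => /and3P[_ _ /ltnW].
have large_ge : B ^ size large <= \prod_(p <- large) p.
  apply: expn_leq_prod; apply/allP => p.
  by rewrite mem_filter -leqNgt => /andP[].
rewrite size_s size_B prod_s prod_B !expnD.
rewrite -!mulnA leq_mul2l; apply/orP; right.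
rewrite mulnCA [X in _ <= X]mulnCA leq_mul2l; apply/orP; right.
by rewrite mulnC leq_mul.
Qed.

End ExchangePrimes.

Lemma expn_lt_prod_primes (B c : nat) (s : seq nat) :
  uniq s -> all prime s -> c <= B ->
  c ^ size (primes_below B) < \prod_(p <- primes_below B) p ->
  size (primes_below B) <= size s ->
  c ^ size s < \prod_(p <- s) p.
Proof.
move=> s_uniq s_prime le_cB lt_c_prod /subnKC.
set k := size (primes_below B); set e := size s - k => size_s.
have B_gt0 : 0 < B.
  by case: B {le_cB k e size_s} lt_c_prod => //; rewrite /primes_below /= big_nil.
have exchange := prod_primes_below_mul_expn B s s_uniq s_prime.
rewrite -size_s expnD mulnCA mulnC leq_pmul2r ?expn_gt0 ?B_gt0 // in exchange.
have le_ce_Be : c ^ e <= B ^ e.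
  by case: (posnP e) => [->|e_gt0]; rewrite ?expn0 ?leq_exp2r.
rewrite -size_s expnD; apply: leq_trans exchange.
by rewrite ltn_mull ?expn_gt0 ?B_gt0.
Qed.

Lemma natpowE (m n : nat) : Nat.pow m n = m ^ n.
Proof. by elim: n => //= n ->; rewrite expnS. Qed.

Lemma Nat2Z_inj_prod (s : seq nat) :
  Z.of_nat (\prod_(i <- s) i) = \big[Z.mul/1%Z]_(i <- s) Z.of_nat i.
Proof. by apply: big_morph => // i j; rewrite -multE Nat2Z.inj_mul. Qed.

Lemma size_primes_below_860 : size (primes_below 860) = 149.
Proof. by vm_compute. Qed.

Lemma expn_lt_prod_primes_below_860 : 256 ^ 149 < \prod_(p <- primes_below 860) p.
Proof.
apply/ltP/Nat2Z.inj_lt; rewrite -natpowE Nat2Z.inj_pow Nat2Z_inj_prod.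
by rewrite unlock; vm_compute.
Qed.

Lemma prod_primes_dvd (m : nat) : 0 < m -> \prod_(p <- primes m) p %| m.
Proof.
move=> m_gt0; rewrite {2}(prod_prime_decomp m_gt0) prime_decompE big_map /=.
rewrite big_seq [X in _ %| X]big_seq.
apply: (big_ind2 (fun a b => a %| b)) => // [a1 a2 b1 b2|p]; first exact: dvdn_mul.
by rewrite -logn_gt0 => /prednK <-; rewrite expnS dvdn_mulr.
Qed.

Lemma W_expn8_lt (m : nat) : 0 < m -> 149 <= omega m -> W m ^ 8 < m.
Proof.
move=> m_gt0 omega_ge; rewrite /W natpowE -expnM mulnC expnM.
apply: leq_trans (dvdn_leq m_gt0 (prod_primes_dvd m m_gt0)).
apply: (@expn_lt_prod_primes 860); rewrite ?size_primes_below_860 //.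
- exact: primes_uniq.
- exact: all_prime_primes.
- exact: expn_lt_prod_primes_below_860.
Qed.

(* Importing Reals (or BinInt) rebinds [^] on [nat] to [Nat.pow]; above this
   point [^] is [expn]. *)
From Stdlib Require Import Reals Lra.

Lemma lt_Rpower_inv (x y : R) (n : nat) :
  (0 < n)%N -> (0 <= y)%R -> (y ^ n < x)%R -> (y < Rpower x (1 / INR n))%R.
Proof.
move=> n_gt0 y_ge0 lt_yn_x.
have x_gt0 : (0 < x)%R by apply: Rle_lt_trans lt_yn_x; apply: pow_le.
have root_pow : (Rpower x (1 / INR n) ^ n = x)%R.
  rewrite -Rpower_pow; last exact: exp_pos.
  rewrite Rpower_mult /Rdiv Rmult_1_l Rinv_l ?Rpower_1 //.
  by apply: not_0_INR; apply/eqP; rewrite -lt0n.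
apply: Rnot_le_lt => le_root_y.
have : (Rpower x (1 / INR n) ^ n <= y ^ n)%R.
  by apply: pow_incr; split => //; apply: Rlt_le; apply: exp_pos.
by rewrite root_pow; lra.
Qed.

Theorem lemma5p1 (m : nat) :
  (0 < m)%N -> (149 <= omega m)%N ->
  (INR (W m) < Rpower (INR m) (1 / 8))%R.
Proof.
move=> m_gt0 omega_ge.
have -> : (1 / 8 = 1 / INR 8)%R by rewrite [INR 8]/=; lra.
apply: lt_Rpower_inv => //; first exact: pos_INR.
by rewrite -pow_INR natpowE; apply/lt_INR/ltP/W_expn8_lt.
Qed.
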